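(* Let $M(C,\bar\xi,\pi)$ be a Myller configuration with Darboux frame $(\bar\xi,\bar\mu,\bar v)$ and invariants $G,K,T$, with $(G(s),K(s))\neq(0,0)$ for all $s$. Then: (i) if $K\equiv 0$, $C$ is a $\bar\xi$-helix iff $\sigma_\xi=\pm T/G$ is constant; (ii) if $G\equiv 0$, $C$ is a $\bar\xi$-helix iff $\sigma_\xi=\pm T/K$ is constant; (iii) if $T\equiv 0$, $C$ is a $\bar\xi$-helix iff $\sigma_\xi=\mp\dfrac{G'K-GK'}{(G^2+K^2)^{3/2}}$ is constant.
   Context: Let $C$ be a smooth curve in Euclidean 3-space $E^3$ parametrized by arclength $s$; primes denote $d/ds$. A Myller configuration $M(C,\bar\xi,\pi)$ consists of a smooth unit vector field $\bar\xi(s)$ along $C$ and a smooth field of oriented planes $\pi(s)$ with $\bar\xi(s)\in\pi(s)$. Let $\bar v(s)$ be the unit normal of $\pi(s)$ and $\bar\mu=\bar v\times\bar\xi$. The Darboux frame satisfies $\bar\xi'=G\bar\mu+K\bar v$, $\bar\mu'=-G\bar\xi+T\bar v$, $\bar v'=-K\bar\xi-T\bar\mu$. $C$ is a $\bar\xi$-helix in $M$ if there are a constant unit vector $\bar d_\xi$ and a constant $\theta$ with $\langle\bar\xi,\bar d_\xi\rangle=\cos\theta$ along $C$. *)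

From Stdlib Require Import Reals.
From Coquelicot Require Import Coquelicot.
Open Scope R_scope.

Record vec := mkV { vx : R; vy : R; vz : R }.

Definition dot (u w : vec) : R := vx u * vx w + vy u * vy w + vz u * vz w.

Definition cross (u w : vec) : vec :=
  mkV (vy u * vz w - vz u * vy w)
      (vz u * vx w - vx u * vz w)
      (vx u * vy w - vy u * vx w).

Definition vadd (u w : vec) : vec := mkV (vx u + vx w) (vy u + vy w) (vz u + vz w).
Definition vscal (c : R) (u : vec) : vec := mkV (c * vx u) (c * vy u) (c * vz u).

Definition vderive (f : R -> vec) (s : R) (w : vec) : Prop :=
  is_derive (fun t => vx (f t)) s (vx w) /\
  is_derive (fun t => vy (f t)) s (vy w) /\
  is_derive (fun t => vz (f t)) s (vz w).

Definition smooth_on (I : R -> Prop) (g : R -> R) : Prop :=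
  forall (n : nat) (s : R), I s -> ex_derive_n g n s.

Definition vsmooth_on (I : R -> Prop) (f : R -> vec) : Prop :=
  smooth_on I (fun t => vx (f t)) /\ smooth_on I (fun t => vy (f t)) /\
  smooth_on I (fun t => vz (f t)).

Definition open_itv (a b : Rbar) (s : R) : Prop := Rbar_lt a s /\ Rbar_lt s b.

(* Myller configuration M(C, xi, pi) along the arclength-parametrized curve r,
   given by its Darboux frame (xi, mu, nu) (nu = unit normal of pi) and
   invariants G, K, T. *)
Definition myller_config (I : R -> Prop) (r xi mu nu : R -> vec) (G K T : R -> R) : Prop :=
  vsmooth_on I r /\ vsmooth_on I xi /\ vsmooth_on I nu /\
  smooth_on I G /\ smooth_on I K /\ smooth_on I T /\
  (forall s, I s ->
     (exists w, vderive r s w /\ dot w w = 1) /\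
     dot (xi s) (xi s) = 1 /\ dot (nu s) (nu s) = 1 /\ dot (xi s) (nu s) = 0 /\
     mu s = cross (nu s) (xi s) /\
     vderive xi s (vadd (vscal (G s) (mu s)) (vscal (K s) (nu s))) /\
     vderive mu s (vadd (vscal (- G s) (xi s)) (vscal (T s) (nu s))) /\
     vderive nu s (vadd (vscal (- K s) (xi s)) (vscal (- T s) (mu s)))).

Definition xi_helix (I : R -> Prop) (xi : R -> vec) : Prop :=
  exists (d : vec) (theta : R), dot d d = 1 /\
    forall s, I s -> dot (xi s) d = cos theta.

Definition const_on (I : R -> Prop) (g : R -> R) : Prop :=
  exists c : R, forall s, I s -> g s = c.

From Stdlib Require Import Reals Lra Nsatz.
From Coquelicot Require Import Coquelicot.
Open Scope R_scope.

(* Fix a unit vector d. The coordinates A = <xi,d>, M = <mu,d>, N = <nu,d>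
   satisfy A' = G M + K N, M' = -G A + T N, N' = -K A - T M and
   A^2 + M^2 + N^2 = 1.  When K = 0 and A is constant, M vanishes, so N is
   constant, nonzero, and T N = G A: hence T / G is constant.  Conversely, if
   T = c G then c xi + nu is a constant vector making a constant angle with xi.

   The other two cases reduce to this one by rotating (mu, nu) about xi, which
   does not change xi and hence the notion of xi-helix: by a quarter turn when
   G = 0, and onto the principal normal (G mu + K nu) / sqrt (G^2 + K^2) when
   T = 0, where the rotated invariants become sqrt (G^2 + K^2), 0 and
   (G K' - G' K) / (G^2 + K^2). *)

(* nsatz does not reify [x ^ n]; unfold the powers first. *)
Ltac poly_nsatz := simpl pow in *; nsatz.

Lemma vec_ext (u w : vec) : vx u = vx w -> vy u = vy w -> vz u = vz w -> u = w.
Proof. destruct u, w; simpl; intros; subst; reflexivity. Qed.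

Lemma dot_vadd_l (u w z : vec) : dot (vadd u w) z = dot u z + dot w z.
Proof. unfold dot; simpl; ring. Qed.

Lemma dot_vadd_r (u w z : vec) : dot z (vadd u w) = dot z u + dot z w.
Proof. unfold dot; simpl; ring. Qed.

Lemma dot_vscal_l (c : R) (u z : vec) : dot (vscal c u) z = c * dot u z.
Proof. unfold dot; simpl; ring. Qed.

Lemma dot_vscal_r (c : R) (u z : vec) : dot z (vscal c u) = c * dot z u.
Proof. unfold dot; simpl; ring. Qed.

Lemma frame_parseval (x n d : vec) :
  dot x x = 1 -> dot n n = 1 -> dot x n = 0 ->
  dot x d ^ 2 + dot (cross n x) d ^ 2 + dot n d ^ 2 = dot d d.
Proof. destruct x, n, d; unfold dot, cross; simpl; intros; poly_nsatz. Qed.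

Lemma rotated_frame_orthonormal (x n : vec) (u v : R) :
  dot x x = 1 -> dot n n = 1 -> dot x n = 0 -> u ^ 2 + v ^ 2 = 1 ->
  let n' := vadd (vscal (- v) (cross n x)) (vscal u n) in
  dot n' n' = 1 /\ dot x n' = 0 /\ vadd (vscal u (cross n x)) (vscal v n) = cross n' x.
Proof.
  destruct x, n; unfold dot, cross, vadd, vscal; simpl; intros.
  split; [|split; [|apply vec_ext; simpl]]; poly_nsatz.
Qed.

Lemma is_derive_Rplus (f g : R -> R) (s df dg : R) :
  is_derive f s df -> is_derive g s dg ->
  is_derive (fun t => f t + g t) s (df + dg).
Proof. exact (is_derive_plus f g s df dg). Qed.

Lemma is_derive_Rmult (f g : R -> R) (s df dg : R) :
  is_derive f s df -> is_derive g s dg ->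
  is_derive (fun t => f t * g t) s (df * g s + f s * dg).
Proof. intros Df Dg; apply (is_derive_mult f g s df dg Df Dg), Rmult_comm. Qed.

Lemma is_derive_Rmult_r (f : R -> R) (c s df : R) :
  is_derive f s df -> is_derive (fun t => f t * c) s (df * c).
Proof.
  intros Df. replace (df * c) with (df * c + f s * 0) by ring.
  exact (is_derive_Rmult f (fun _ => c) s df 0 Df (is_derive_const c s)).
Qed.

Lemma vderive_vadd (f g : R -> vec) (s : R) (w z : vec) :
  vderive f s w -> vderive g s z -> vderive (fun t => vadd (f t) (g t)) s (vadd w z).
Proof.
  intros (Dfx & Dfy & Dfz) (Dgx & Dgy & Dgz).
  split; [|split]; apply is_derive_Rplus; assumption.
Qed.

Lemma vderive_vscal (h : R -> R) (f : R -> vec) (s dh : R) (w : vec) :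
  is_derive h s dh -> vderive f s w ->
  vderive (fun t => vscal (h t) (f t)) s (vadd (vscal dh (f s)) (vscal (h s) w)).
Proof.
  intros Dh (Dfx & Dfy & Dfz).
  split; [|split]; apply is_derive_Rmult; assumption.
Qed.

Lemma is_derive_dot_const (f : R -> vec) (s : R) (w d : vec) :
  vderive f s w -> is_derive (fun t => dot (f t) d) s (dot w d).
Proof.
  intros (Dfx & Dfy & Dfz). unfold dot.
  repeat apply is_derive_Rplus; apply is_derive_Rmult_r; assumption.
Qed.

Lemma sqrt_ind (x : R) (P : R -> Prop) :
  0 < x -> (forall q, 0 < q -> q * q = x -> P q) -> P (sqrt x).
Proof. intros Hx HP. apply HP; [apply sqrt_lt_R0 | apply sqrt_sqrt; lra]; exact Hx. Qed.

Lemma is_derive_div_norm (X Y : R -> R) (s : R) :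
  ex_derive X s -> ex_derive Y s -> 0 < X s ^ 2 + Y s ^ 2 ->
  is_derive (fun t => X t / sqrt (X t ^ 2 + Y t ^ 2)) s
    (Y s * (Derive X s * Y s - X s * Derive Y s) / sqrt (X s ^ 2 + Y s ^ 2) ^ 3).
Proof.
  intros DX DY HS.
  auto_derive; simpl pow in *;
    pattern (sqrt (X s * (X s * 1) + Y s * (Y s * 1))); apply sqrt_ind; try exact HS;
    intros q Hq Hq2.
  - repeat split; auto. apply Rgt_not_eq, Hq.
  - change (Derive (fun x => X x) s) with (Derive X s).
    change (Derive (fun x => Y x) s) with (Derive Y s).
    field_simplify_eq; [poly_nsatz | apply Rgt_not_eq, Hq].
Qed.

Lemma Rpower_three_halves (x : R) : 0 < x -> Rpower x (3 / 2) = x * sqrt x.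
Proof.
  intros Hx. replace (3 / 2) with (1 + / 2) by field.
  rewrite Rpower_plus, Rpower_1, Rpower_sqrt by exact Hx. reflexivity.
Qed.

Section OpenInterval.

Variables a b : Rbar.
Local Notation I := (open_itv a b).

Lemma open_itv_inhabited : Rbar_lt a b -> exists s, I s.
Proof.
  destruct a as [x| |], b as [y| |]; simpl; intros Hab; try tauto.
  - exists ((x + y) / 2); split; simpl; lra.
  - exists (x + 1); split; simpl; auto; lra.
  - exists (y - 1); split; simpl; auto; lra.
  - exists 0; split; simpl; auto.
Qed.

Lemma open_itv_locally (s : R) : I s -> locally s I.
Proof. apply (open_and _ _ (open_Rbar_gt a) (open_Rbar_lt b)). Qed.

Lemma open_itv_convex (x y z : R) : I x -> I y -> Rmin x y <= z <= Rmax x y -> I z.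
Proof.
  intros [Hax Hxb] [Hay Hyb] [Hz1 Hz2]; split.
  - destruct (Rle_dec x y) as [Hxy|Hxy].
    + rewrite Rmin_left in Hz1 by lra. apply (Rbar_lt_le_trans _ _ _ Hax); simpl; lra.
    + rewrite Rmin_right in Hz1 by lra. apply (Rbar_lt_le_trans _ _ _ Hay); simpl; lra.
  - destruct (Rle_dec x y) as [Hxy|Hxy].
    + rewrite Rmax_right in Hz2 by lra. apply (Rbar_le_lt_trans _ y); [simpl; lra | exact Hyb].
    + rewrite Rmax_left in Hz2 by lra. apply (Rbar_le_lt_trans _ x); [simpl; lra | exact Hxb].
Qed.

Lemma is_derive_const_on (f : R -> R) (c s l : R) :
  (forall t, I t -> f t = c) -> I s -> is_derive f s l -> l = 0.
Proof.
  intros Hc Hs Df.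
  assert (Dc : is_derive (fun _ => c) s l).
  { apply (is_derive_ext_loc f); [|exact Df].
    apply (filter_imp I); [exact Hc | exact (open_itv_locally s Hs)]. }
  rewrite <- (is_derive_unique _ _ _ Dc). apply Derive_const.
Qed.

Lemma eq_of_is_derive0 (f : R -> R) (s1 s2 : R) :
  (forall t, I t -> is_derive f t 0) -> I s1 -> I s2 -> f s1 = f s2.
Proof.
  intros Df H1 H2.
  destruct (MVT_gen f s1 s2 (fun _ => 0)) as [c [_ Hc]].
  - intros x Hx. apply Df, (open_itv_convex s1 s2); auto; lra.
  - intros x Hx. apply continuity_pt_filterlim, (ex_derive_continuous (V := R_NormedModule)).
    exists 0. apply Df, (open_itv_convex s1 s2); auto.
  - lra.
Qed.

Lemma vec_eq_of_vderive0 (f : R -> vec) (s1 s2 : R) :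
  (forall t, I t -> vderive f t (mkV 0 0 0)) -> I s1 -> I s2 -> f s1 = f s2.
Proof.
  intros Df H1 H2.
  apply vec_ext;
    [ apply (eq_of_is_derive0 (fun t => vx (f t)))
    | apply (eq_of_is_derive0 (fun t => vy (f t)))
    | apply (eq_of_is_derive0 (fun t => vz (f t))) ];
    auto; intros t Ht; apply (Df t Ht).
Qed.

End OpenInterval.

Definition darboux_frame (I : R -> Prop) (xi mu nu : R -> vec) (G K T : R -> R) : Prop :=
  forall s, I s ->
    dot (xi s) (xi s) = 1 /\ dot (nu s) (nu s) = 1 /\ dot (xi s) (nu s) = 0 /\
    mu s = cross (nu s) (xi s) /\
    vderive xi s (vadd (vscal (G s) (mu s)) (vscal (K s) (nu s))) /\
    vderive mu s (vadd (vscal (- G s) (xi s)) (vscal (T s) (nu s))) /\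
    vderive nu s (vadd (vscal (- K s) (xi s)) (vscal (- T s) (mu s))).

Lemma myller_config_darboux_frame I r xi mu nu G K T :
  myller_config I r xi mu nu G K T -> darboux_frame I xi mu nu G K T.
Proof.
  intros (_ & _ & _ & _ & _ & _ & Hconfig) s Hs.
  destruct (Hconfig s Hs) as (_ & Hframe). exact Hframe.
Qed.

Lemma smooth_on_ex_derive (I : R -> Prop) (g : R -> R) (s : R) :
  smooth_on I g -> I s -> ex_derive g s.
Proof. intros Hg Hs. exact (Hg 1%nat s Hs). Qed.

Lemma is_derive_frame_coords I xi mu nu G K T (d : vec) (s : R) :
  darboux_frame I xi mu nu G K T -> I s ->
  is_derive (fun t => dot (xi t) d) s (G s * dot (mu s) d + K s * dot (nu s) d) /\
  is_derive (fun t => dot (mu t) d) s (- G s * dot (xi s) d + T s * dot (nu s) d) /\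
  is_derive (fun t => dot (nu t) d) s (- K s * dot (xi s) d + - T s * dot (mu s) d).
Proof.
  intros Hframe Hs. destruct (Hframe s Hs) as (_ & _ & _ & _ & Dxi & Dmu & Dnu).
  split; [|split];
    [ generalize (is_derive_dot_const _ _ _ d Dxi)
    | generalize (is_derive_dot_const _ _ _ d Dmu)
    | generalize (is_derive_dot_const _ _ _ d Dnu) ];
    rewrite dot_vadd_l, !dot_vscal_l; trivial.
Qed.

Lemma const_on_ext (I : R -> Prop) (f g : R -> R) :
  (forall s, I s -> f s = g s) -> (const_on I f <-> const_on I g).
Proof.
  intros Hfg; split; intros [c Hc]; exists c; intros s Hs;
    [rewrite <- (Hfg s Hs) | rewrite (Hfg s Hs)]; exact (Hc s Hs).
Qed.

Lemma xi_helix_of_dot_const (I : R -> Prop) (xi : R -> vec) (D : vec) (c : R) :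
  0 < dot D D -> c ^ 2 <= dot D D -> (forall s, I s -> dot (xi s) D = c) ->
  xi_helix I xi.
Proof.
  intros HD HcD Hc.
  pose (L := sqrt (dot D D)).
  assert (HL : 0 < L) by (apply sqrt_lt_R0, HD).
  assert (HL2 : L * L = dot D D) by (apply sqrt_sqrt; lra).
  exists (vscal (/ L) D), (acos (c / L)). split.
  - rewrite dot_vscal_l, dot_vscal_r, <- HL2. field. lra.
  - intros s Hs. rewrite cos_acos, dot_vscal_r, (Hc s Hs).
    + unfold Rdiv. ring.
    + pose (y := c / L). assert (Hy : c = y * L) by (unfold y; field; lra).
      fold y. rewrite Hy, <- HL2 in HcD.
      assert (Hy2 : y * y <= 1) by (apply (Rmult_le_reg_r (L * L)); nra).
      split; nra.
Qed.

Section ZeroNormalCurvature.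

Variables (a b : Rbar) (xi mu nu : R -> vec) (G K T : R -> R).
Local Notation I := (open_itv a b).
Hypothesis Hab : Rbar_lt a b.
Hypothesis Hframe : darboux_frame I xi mu nu G K T.
Hypothesis HK0 : forall s, I s -> K s = 0.
Hypothesis HG : forall s, I s -> G s <> 0.

Lemma const_T_over_G_of_xi_helix : xi_helix I xi -> const_on I (fun s => T s / G s).
Proof.
  intros (d & th & Hd & Hc).
  destruct (open_itv_inhabited a b Hab) as [s0 Hs0].
  assert (HM : forall s, I s -> dot (mu s) d = 0).
  { intros s Hs. destruct (is_derive_frame_coords _ _ _ _ _ _ _ d s Hframe Hs) as [DA _].
    apply (is_derive_const_on a b _ _ _ _ Hc Hs) in DA.
    rewrite HK0 in DA by exact Hs.
    destruct (Rmult_integral (G s) (dot (mu s) d)) as [E|E];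
      [lra | contradiction (HG s Hs) | exact E]. }
  assert (HTN : forall s, I s -> T s * dot (nu s) d = G s * cos th).
  { intros s Hs. destruct (is_derive_frame_coords _ _ _ _ _ _ _ d s Hframe Hs) as (_ & DM & _).
    apply (is_derive_const_on a b _ _ _ _ HM Hs) in DM.
    rewrite Hc in DM by exact Hs. lra. }
  assert (HN : forall s, I s -> dot (nu s) d = dot (nu s0) d).
  { intros s Hs. apply (eq_of_is_derive0 a b (fun t => dot (nu t) d)); auto.
    intros t Ht. destruct (is_derive_frame_coords _ _ _ _ _ _ _ d t Hframe Ht) as (_ & _ & DN).
    rewrite HK0, HM in DN by exact Ht. replace 0 with (- 0 * dot (xi t) d + - T t * 0) by ring.
    exact DN. }
  assert (Hunit : cos th ^ 2 + dot (nu s0) d ^ 2 = 1).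
  { destruct (Hframe s0 Hs0) as (Hxx & Hnn & Hxn & Hmu & _).
    rewrite <- Hd, <- (frame_parseval _ _ d Hxx Hnn Hxn), <- Hmu, Hc, HM by exact Hs0. ring. }
  assert (HN0 : dot (nu s0) d <> 0).
  { intros E. specialize (HTN s0 Hs0). rewrite E, Rmult_0_r in HTN.
    destruct (Rmult_integral (G s0) (cos th)) as [E'|E']; [lra | contradiction (HG s0 Hs0) |].
    rewrite E, E' in Hunit. lra. }
  exists (cos th / dot (nu s0) d). intros s Hs.
  specialize (HTN s Hs). rewrite HN in HTN by exact Hs.
  field_simplify_eq; [lra | split; [exact HN0 | exact (HG s Hs)]].
Qed.

Lemma xi_helix_of_const_T_over_G : const_on I (fun s => T s / G s) -> xi_helix I xi.
Proof.
  intros [c Hc].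
  destruct (open_itv_inhabited a b Hab) as [s0 Hs0].
  pose (D := fun t => vadd (vscal c (xi t)) (nu t)).
  assert (HD : forall s, I s -> D s = D s0).
  { intros s Hs. apply (vec_eq_of_vderive0 a b D); auto.
    intros t Ht. destruct (Hframe t Ht) as (_ & _ & _ & _ & Dxi & _ & Dnu).
    assert (HT : T t = c * G t) by (rewrite <- (Hc t Ht); field; exact (HG t Ht)).
    refine (eq_ind _ (vderive D t) (vderive_vadd _ _ t _ _
      (vderive_vscal (fun _ => c) xi t 0 _ (is_derive_const c t) Dxi) Dnu) _ _).
    apply vec_ext; simpl; rewrite HT, HK0 by exact Ht; ring. }
  assert (HDD : dot (D s0) (D s0) = c ^ 2 + 1).
  { destruct (Hframe s0 Hs0) as (Hxx & Hnn & Hxn & _).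
    unfold D. clear - Hxx Hnn Hxn. unfold dot, vadd, vscal in *; simpl in *. poly_nsatz. }
  apply (xi_helix_of_dot_const I xi (D s0) c); [nra | lra |].
  intros s Hs. destruct (Hframe s Hs) as (Hxx & _ & Hxn & _).
  rewrite <- (HD s Hs). unfold D. rewrite dot_vadd_r, dot_vscal_r, Hxx, Hxn. ring.
Qed.

Lemma xi_helix_iff_const_T_over_G : xi_helix I xi <-> const_on I (fun s => T s / G s).
Proof. split; [exact const_T_over_G_of_xi_helix | exact xi_helix_of_const_T_over_G]. Qed.

End ZeroNormalCurvature.

Section FrameRotation.

Variables (a b : Rbar) (xi mu nu : R -> vec) (G K T u v du dv : R -> R).
Local Notation I := (open_itv a b).
Hypothesis Hframe : darboux_frame I xi mu nu G K T.
Hypothesis Du : forall s, I s -> is_derive u s (du s).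
Hypothesis Dv : forall s, I s -> is_derive v s (dv s).
Hypothesis Huv : forall s, I s -> u s ^ 2 + v s ^ 2 = 1.

Lemma unit_pair_derive_orth (s : R) : I s -> u s * du s + v s * dv s = 0.
Proof.
  intros Hs.
  assert (Hc : forall t, I t -> u t * u t + v t * v t = 1)
    by (intros t Ht; rewrite <- (Huv t Ht); ring).
  pose proof (is_derive_Rplus _ _ s _ _ (is_derive_Rmult _ _ s _ _ (Du s Hs) (Du s Hs))
                                       (is_derive_Rmult _ _ s _ _ (Dv s Hs) (Dv s Hs))) as D.
  apply (is_derive_const_on a b _ _ _ _ Hc Hs) in D. lra.
Qed.

(* With (u, v) = (cos phi, sin phi) this turns (mu, nu) about xi by the angle
   phi, and u dv - v du is phi'. *)
Lemma darboux_frame_rotate :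
  darboux_frame I xi
    (fun s => vadd (vscal (u s) (mu s)) (vscal (v s) (nu s)))
    (fun s => vadd (vscal (- v s) (mu s)) (vscal (u s) (nu s)))
    (fun s => u s * G s + v s * K s) (fun s => u s * K s - v s * G s)
    (fun s => T s + (u s * dv s - v s * du s)).
Proof.
  intros s Hs.
  destruct (Hframe s Hs) as (Hxx & Hnn & Hxn & Hmu & Dxi & Dmu & Dnu).
  destruct (rotated_frame_orthonormal (xi s) (nu s) (u s) (v s) Hxx Hnn Hxn (Huv s Hs))
    as (Hunit & Horth & Hcross).
  rewrite <- Hmu in Hunit, Horth, Hcross.
  refine (conj Hxx (conj Hunit (conj Horth (conj Hcross (conj _ (conj _ _)))))).
  - refine (eq_ind _ (vderive xi s) Dxi _ _).
    assert (Hu := Huv s Hs). clear - Hu.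
    apply vec_ext; simpl; poly_nsatz.
  - refine (eq_ind _ (vderive _ s) (vderive_vadd _ _ s _ _
      (vderive_vscal u mu s _ _ (Du s Hs) Dmu) (vderive_vscal v nu s _ _ (Dv s Hs) Dnu)) _ _).
    assert (Hu := Huv s Hs). assert (Hd := unit_pair_derive_orth s Hs). clear - Hu Hd.
    apply vec_ext; simpl; poly_nsatz.
  - refine (eq_ind _ (vderive _ s) (vderive_vadd _ _ s _ _
      (vderive_vscal (fun t => - v t) mu s _ _ (is_derive_opp _ _ _ (Dv s Hs)) Dmu)
      (vderive_vscal u nu s _ _ (Du s Hs) Dnu)) _ _).
    assert (Hu := Huv s Hs). assert (Hd := unit_pair_derive_orth s Hs). clear - Hu Hd.
    apply vec_ext; simpl; poly_nsatz.
Qed.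

End FrameRotation.

Lemma xi_helix_iff_const_T_over_K a b xi mu nu G K T :
  Rbar_lt a b -> darboux_frame (open_itv a b) xi mu nu G K T ->
  (forall s, open_itv a b s -> G s = 0) -> (forall s, open_itv a b s -> K s <> 0) ->
  (xi_helix (open_itv a b) xi <-> const_on (open_itv a b) (fun s => T s / K s)).
Proof.
  intros Hab Hframe HG0 HK.
  pose proof (darboux_frame_rotate a b xi mu nu G K T (fun _ => 0) (fun _ => 1)
    (fun _ => 0) (fun _ => 0) Hframe (fun s _ => is_derive_const 0 s)
    (fun s _ => is_derive_const 1 s) ltac:(intros; cbv beta; ring)) as Hrot.
  rewrite (xi_helix_iff_const_T_over_G a b _ _ _ _ _ _ Hab Hrot).
  - apply const_on_ext. intros s Hs. f_equal; ring.
  - intros s Hs. rewrite (HG0 s Hs). ring.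
  - intros s Hs. replace (0 * G s + 1 * K s) with (K s) by ring. exact (HK s Hs).
Qed.

Lemma xi_helix_iff_const_sigma_of_T0 a b xi mu nu G K T :
  Rbar_lt a b -> darboux_frame (open_itv a b) xi mu nu G K T ->
  (forall s, open_itv a b s -> T s = 0) ->
  (forall s, open_itv a b s -> ex_derive G s) -> (forall s, open_itv a b s -> ex_derive K s) ->
  (forall s, open_itv a b s -> 0 < G s ^ 2 + K s ^ 2) ->
  (xi_helix (open_itv a b) xi <->
   const_on (open_itv a b)
     (fun s => - (Derive G s * K s - G s * Derive K s) / Rpower (G s ^ 2 + K s ^ 2) (3 / 2))).
Proof.
  intros Hab Hframe HT0 DG DK HS.
  pose (kappa t := sqrt (G t ^ 2 + K t ^ 2)).
  assert (Du : forall s, open_itv a b s -> is_derive (fun t => G t / kappa t) s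
                 (K s * (Derive G s * K s - G s * Derive K s) / kappa s ^ 3)).
  { intros s Hs. apply is_derive_div_norm; auto. }
  assert (Dv : forall s, open_itv a b s -> is_derive (fun t => K t / kappa t) s
                 (G s * (Derive K s * G s - K s * Derive G s) / kappa s ^ 3)).
  { intros s Hs. unfold kappa. rewrite (Rplus_comm (G s ^ 2)).
    apply (is_derive_ext (fun t => K t / sqrt (K t ^ 2 + G t ^ 2))).
    { intros t. rewrite Rplus_comm. reflexivity. }
    apply is_derive_div_norm; auto. rewrite Rplus_comm. auto. }
  assert (Hunit : forall s, open_itv a b s -> (G s / kappa s) ^ 2 + (K s / kappa s) ^ 2 = 1).
  { intros s Hs. unfold kappa.
    pattern (sqrt (G s ^ 2 + K s ^ 2)); apply sqrt_ind; [exact (HS s Hs) | intros q Hq Hq2].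
    field_simplify_eq; [poly_nsatz | apply Rgt_not_eq, Hq]. }
  pose proof (darboux_frame_rotate a b xi mu nu G K T _ _ _ _ Hframe Du Dv Hunit) as Hrot.
  rewrite (xi_helix_iff_const_T_over_G a b _ _ _ _ _ _ Hab Hrot).
  - apply const_on_ext. intros s Hs. unfold kappa.
    rewrite HT0, Rpower_three_halves by auto.
    pattern (sqrt (G s ^ 2 + K s ^ 2)); apply sqrt_ind; [exact (HS s Hs) | intros q Hq Hq2].
    field_simplify_eq; [poly_nsatz |].
    split; apply Rgt_not_eq; [exact Hq | exact (HS s Hs)].
  - intros s Hs. unfold Rdiv. ring.
  - intros s Hs. unfold kappa.
    pattern (sqrt (G s ^ 2 + K s ^ 2)); apply sqrt_ind; [exact (HS s Hs) | intros q Hq Hq2].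
    replace (G s / q * G s + K s / q * K s) with q
      by (field_simplify_eq; [poly_nsatz | apply Rgt_not_eq, Hq]).
    apply Rgt_not_eq, Hq.
Qed.

Lemma Rplus_sqr_pos (x y : R) : x <> 0 \/ y <> 0 -> 0 < x ^ 2 + y ^ 2.
Proof.
  intros [Hx|Hy]; [pose proof (Rlt_0_sqr _ Hx); pose proof (pow2_ge_0 y)
                 | pose proof (Rlt_0_sqr _ Hy); pose proof (pow2_ge_0 x)];
    unfold Rsqr in *; nra.
Qed.

Theorem corollary8 (a b : Rbar) (r xi mu nu : R -> vec) (G K T : R -> R) :
  Rbar_lt a b ->
  myller_config (open_itv a b) r xi mu nu G K T ->
  (forall s, open_itv a b s -> G s <> 0 \/ K s <> 0) ->
  ((forall s, open_itv a b s -> K s = 0) ->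
     (xi_helix (open_itv a b) xi <-> const_on (open_itv a b) (fun s => T s / G s))) /\
  ((forall s, open_itv a b s -> G s = 0) ->
     (xi_helix (open_itv a b) xi <-> const_on (open_itv a b) (fun s => T s / K s))) /\
  ((forall s, open_itv a b s -> T s = 0) ->
     (xi_helix (open_itv a b) xi <->
      const_on (open_itv a b)
        (fun s => - (Derive G s * K s - G s * Derive K s)
                  / Rpower (G s ^ 2 + K s ^ 2) (3 / 2)))).
Proof.
  intros Hab Hmc Hnz.
  pose proof (myller_config_darboux_frame _ _ _ _ _ _ _ _ Hmc) as Hframe.
  destruct Hmc as (_ & _ & _ & HGs & HKs & _).
  split; [|split]; intros Hzero.
  - apply (xi_helix_iff_const_T_over_G a b xi mu nu G K T Hab Hframe Hzero).
    intros s Hs. destruct (Hnz s Hs) as [HG|HK]; [exact HG | contradiction (HK (Hzero s Hs))].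
  - apply (xi_helix_iff_const_T_over_K a b xi mu nu G K T Hab Hframe Hzero).
    intros s Hs. destruct (Hnz s Hs) as [HG|HK]; [contradiction (HG (Hzero s Hs)) | exact HK].
  - apply (xi_helix_iff_const_sigma_of_T0 a b xi mu nu G K T Hab Hframe Hzero); intros s Hs.
    + exact (smooth_on_ex_derive _ _ _ HGs Hs).
    + exact (smooth_on_ex_derive _ _ _ HKs Hs).
    + exact (Rplus_sqr_pos _ _ (Hnz s Hs)).
Qed.
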